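(* Let $\beta\in(0,2]$, $N>0$, and let $B$ be a Young function with $B(t)=Ne^{t^\beta}$ for all $t>t_0$ (some $t_0>0$), $B(t)=\int_0^tb$ with $b$ non-decreasing and left-continuous. For $t>0$ let $\lambda_t>0$ satisfy $\int_0^tB(b^{-1}(\lambda_te^{\tau^2/2}))e^{-\tau^2/2}\,d\tau=\sqrt{2\pi}$. Then $$\lim_{t\to\infty}\frac{\lambda_t}{c_\beta\,t^{1-\frac2\beta}}=1\ \text{ if }\beta\in(0,2),\qquad \lim_{t\to\infty}\frac{\lambda_t\log t}{c_2}=1\ \text{ if }\beta=2,$$ where $c_\beta=2^{\frac1\beta-\frac12}\sqrt\pi\,(2-\beta)$ for $\beta\in(0,2)$ and $c_2=2\sqrt\pi$.
   Context: A Young function is a convex $B\colon[0,\infty)\to[0,\infty]$ with $B(0)=0$; $b^{-1}(s)=\inf\{r\ge0:b(r)\ge s\}$ is the left-continuous generalized inverse of $b$. *)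

From Stdlib Require Import Reals.
Open Scope R_scope.

Definition is_inf (E : R -> Prop) (m : R) : Prop :=
  (forall x, E x -> m <= x) /\ (forall m', (forall x, E x -> m' <= x) -> m' <= m).

Definition is_gen_inv (b binv : R -> R) : Prop :=
  forall s, is_inf (fun r => 0 <= r /\ s <= b r) (binv s).

(* Young function (real-valued here): convex on [0,oo), nonnegative, B 0 = 0 *)
Definition young (B : R -> R) : Prop :=
  B 0 = 0 /\ (forall t, 0 <= t -> 0 <= B t) /\
  (forall x y th, 0 <= x -> 0 <= y -> 0 <= th <= 1 ->
     B (th * x + (1 - th) * y) <= th * B x + (1 - th) * B y).

Definition nondecr_on_nonneg (b : R -> R) : Prop :=
  forall x y, 0 <= x -> x <= y -> b x <= b y.

Definition left_cont_pos (b : R -> R) : Prop :=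
  forall x, 0 < x -> forall eps, 0 < eps ->
    exists d, 0 < d /\ forall y, 0 < y -> x - d < y -> y <= x -> Rabs (b y - b x) < eps.

Definition lim_infty (f : R -> R) (l : R) : Prop :=
  forall eps, 0 < eps -> exists M, forall t, M < t -> Rabs (f t - l) < eps.

Definition c_beta (beta : R) : R :=
  Rpower 2 (1 / beta - 1 / 2) * sqrt PI * (2 - beta).

(* For large s the point r = b^{-1}(s) lies where B(r) = N e^{r^beta}, and since b < s to the
   left of r and b >= s to its right, s = B'(r) = N beta r^{beta-1} e^{r^beta}.  Hence
   B(b^{-1}(s)) = s r^{1-beta} / beta with r^beta = (1 + o(1)) ln s.  Putting s = l e^{tau^2/2},
   the integrand becomes (1 + o(1)) (l / beta) (tau^2/2)^{(1-beta)/beta} once tau is large and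
   ln l is small compared with tau^2.  Cutting the integral at T(t) = sqrt (2 K ln t), the part
   over [0, T] is negligible and the part over [T, t] is (1 + o(1)) (l / beta) 2^{(beta-1)/beta}
   Phi(t), where Phi(t) = t^{2/beta-1} / (2/beta - 1) for beta < 2 and Phi = ln for beta = 2.
   Since the integral increases with l, comparing lambda_t with (1 +- delta) times the value
   making this equal to sqrt (2 pi) yields both limits. *)

From Stdlib Require Import Reals Lra Classical.
From Coquelicot Require Import Coquelicot.
Open Scope R_scope.

Notation at_infty := (Rbar_locally p_infty).

Lemma exp_le x y : x <= y -> exp x <= exp y.
Proof. intros [Hlt | ->]; [now apply Rlt_le, exp_increasing | apply Rle_refl]. Qed.

Lemma le_of_ln_le a b : 0 < a -> 0 < b -> ln a <= ln b -> a <= b.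
Proof. intros Ha Hb H. rewrite <- (exp_ln a), <- (exp_ln b) by auto. now apply exp_le. Qed.

Lemma exists_small_factor k c : 0 < k -> 0 <= c ->
  exists eps, 0 < eps <= 1 / 4 /\ 4 * c * eps <= k.
Proof.
  intros Hk Hc. exists (Rmin (1 / 4) (k / (4 * c + 1))).
  pose proof (Rmin_l (1 / 4) (k / (4 * c + 1))). pose proof (Rmin_r (1 / 4) (k / (4 * c + 1))).
  set (eps := Rmin (1 / 4) (k / (4 * c + 1))) in *.
  assert (Hpos : 0 < eps) by (apply Rmin_glb_lt; [lra | apply Rdiv_lt_0_compat; lra]).
  assert (eps * (4 * c + 1) <= k).
  { apply Rmult_le_reg_r with (/ (4 * c + 1)); [apply Rinv_0_lt_compat; lra|].
    rewrite Rmult_assoc, Rinv_r, Rmult_1_r by lra. assumption. }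
  split; [lra | nra].
Qed.

Lemma ln_le_sub1 x : 0 < x -> ln x <= x - 1.
Proof. intros Hx. pose proof (exp_ineq1_le (ln x)). rewrite exp_ln in *; lra. Qed.

Lemma ln_ratio_bound eps v y : 0 < v -> 0 < eps <= 1 / 4 ->
  (1 - eps) ^ 2 * v <= y <= (1 + eps) * v -> Rabs (ln y - ln v) <= 4 * eps.
Proof.
  intros Hv Heps Hy.
  assert (Hlow : - (2 * eps) <= ln (1 - eps)).
  { pose proof (ln_le_sub1 (/ (1 - eps)) ltac:(apply Rinv_0_lt_compat; lra)) as H.
    rewrite ln_Rinv in H by lra.
    enough (/ (1 - eps) <= 1 + 2 * eps) by lra.
    apply Rmult_le_reg_r with (1 - eps); [lra|]. rewrite Rinv_l; nra. }
  pose proof (ln_le_sub1 (1 + eps) ltac:(lra)) as Hup.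
  assert (Hlo : ln ((1 - eps) ^ 2 * v) <= ln y) by (apply ln_le; [nra | lra]).
  assert (Hhi : ln y <= ln ((1 + eps) * v)) by (apply ln_le; nra).
  rewrite ln_mult in Hlo, Hhi by nra. rewrite <- Rpower_pow, ln_Rpower in Hlo by lra.
  simpl in Hlo. apply Rabs_le. lra.
Qed.

Lemma Rpower_half_square p tau : 0 < tau ->
  Rpower (tau ^ 2 / 2) p = Rpower 2 (- p) * Rpower tau (2 * p).
Proof.
  intros Htau. unfold Rpower. rewrite <- exp_plus. f_equal.
  assert (Htau2 : 0 < tau * tau) by nra.
  unfold Rdiv. simpl pow. rewrite Rmult_1_r, ln_mult, ln_Rinv, ln_mult by lra. ring.
Qed.

Lemma is_derive_Rpower_div q x : q <> 0 -> 0 < x ->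
  is_derive (fun y => Rpower y q / q) x (Rpower x (q - 1)).
Proof.
  intros Hq Hx. unfold Rpower. auto_derive; [lra|].
  replace ((q - 1) * ln x) with (q * ln x + - ln x) by ring.
  rewrite exp_plus, exp_Ropp, exp_ln by lra. field. lra.
Qed.

Lemma derivable_pt_lim_squeeze (F : R -> R) r l s d0 : 0 < d0 ->
  derivable_pt_lim F r l ->
  (forall h, 0 < h < d0 -> F r - F (r - h) <= s * h) ->
  (forall h, 0 < h < d0 -> s * h <= F (r + h) - F r) -> l = s.
Proof.
  intros Hd0 HF Hleft Hright.
  assert (Hclose : forall e, 0 < e -> s - e < l < s + e).
  { intros e He. destruct (HF e He) as [[d Hd] Hq]; simpl in Hq.
    set (h := Rmin d d0 / 2).
    assert (Hh : 0 < h < d0 /\ h < d)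
      by (unfold h; pose proof (Rmin_l d d0); pose proof (Rmin_r d d0);
          pose proof (Rmin_glb_lt d d0 0 Hd Hd0); lra).
    pose proof (Hq h ltac:(lra) ltac:(rewrite Rabs_right; lra)) as Qr.
    pose proof (Hq (- h) ltac:(lra) ltac:(rewrite Rabs_left; lra)) as Ql.
    apply Rabs_def2 in Qr, Ql.
    pose proof (Hleft h ltac:(lra)) as Hl. pose proof (Hright h ltac:(lra)) as Hr.
    replace (r + - h) with (r - h) in Ql by ring.
    assert (El : (F (r - h) - F r) / - h = (F r - F (r - h)) / h) by (field; lra).
    assert (Ql' : (F r - F (r - h)) / h <= s)
      by (apply Rmult_le_reg_r with h; [lra | unfold Rdiv; rewrite Rmult_assoc, Rinv_l; lra]).
    assert (Qr' : s <= (F (r + h) - F r) / h)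
      by (apply Rmult_le_reg_r with h; [lra | unfold Rdiv; rewrite Rmult_assoc, Rinv_l; lra]).
    lra. }
  apply Rle_antisym; apply le_epsilon; intros e He; pose proof (Hclose e He); lra.
Qed.

Lemma is_RInt_Rpower (Phi : R -> R) e K a b : 0 < a <= b ->
  (forall x, 0 < x -> is_derive Phi x (Rpower x e)) ->
  is_RInt (fun x => K * Rpower x e) a b (K * (Phi b - Phi a)).
Proof.
  intros Hab HPhi.
  apply (is_RInt_scal (V := R_NormedModule) (fun x => Rpower x e) a b K (Phi b - Phi a)).
  apply (is_RInt_derive (V := R_CompleteNormedModule)); intros x Hx;
    rewrite Rmin_left, Rmax_right in Hx by lra.
  - apply HPhi. lra.
  - apply (ex_derive_continuous (K := R_AbsRing) (V := R_NormedModule)).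
    unfold Rpower. auto_derive. lra.
Qed.

Lemma RInt_split f t T : 0 <= T <= t -> ex_RInt f 0 t ->
  ex_RInt f 0 T /\ ex_RInt f T t /\ RInt f 0 T + RInt f T t = RInt f 0 t.
Proof.
  intros HT Hf.
  assert (H1 : ex_RInt f 0 T) by (apply (ex_RInt_Chasles_1 f 0 T t); auto).
  assert (H2 : ex_RInt f T t) by (apply (ex_RInt_Chasles_2 f 0 T t); auto).
  repeat split; auto. exact (RInt_Chasles f 0 T t H1 H2).
Qed.

Lemma lt_of_ln_ge M s : 0 < s -> Rabs M + 1 <= ln s -> M < s.
Proof.
  intros Hs Hln. pose proof (exp_ineq1_le (ln s)). rewrite exp_ln in * by lra.
  pose proof (Rle_abs M). lra.
Qed.

Lemma at_infty_ge a : at_infty (fun x => a <= x).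
Proof. exists a. intros; lra. Qed.

Lemma at_infty_ge_mul a e : 0 < e -> at_infty (fun x => a <= e * x).
Proof.
  intros He. exists (a / e). intros x Hx.
  apply Rmult_lt_compat_l with (r := e) in Hx; [|lra].
  replace (e * (a / e)) with a in Hx by (field; lra). lra.
Qed.

Lemma at_infty_ln (P : R -> Prop) : at_infty P -> at_infty (fun t => P (ln t)).
Proof. exact (is_lim_ln_p P). Qed.

Lemma ln_little_o a c e : 0 < e -> at_infty (fun y => Rabs (a + c * ln y) <= e * y).
Proof.
  intros He. set (k := Rabs c + 1). assert (Hk : 0 < k) by (unfold k; pose proof (Rabs_pos c); lra).
  assert (He' : 0 < e / (2 * k)) by (apply Rdiv_lt_0_compat; lra).
  assert (Hln : at_infty (fun y => Rabs (ln y / y - 0) < e / (2 * k)))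
    by exact (proj2 (is_lim_spec _ _ _) is_lim_div_ln_p (mkposreal _ He')).
  generalize (filter_and _ _ Hln (at_infty_ge (2 * Rabs a / e + 1))).
  apply filter_imp. intros y [Hq Hy].
  assert (Ha : Rabs a <= e / 2 * y).
  { apply Rle_trans with (e / 2 * (2 * Rabs a / e)); [right; field; lra|].
    apply Rmult_le_compat_l; lra. }
  assert (Hy0 : 0 < y)
    by (assert (0 <= 2 * Rabs a / e) by (apply Rdiv_le_0_compat; [pose proof (Rabs_pos a) |]; lra);
        lra).
  rewrite Rminus_0_r, Rabs_div, (Rabs_right y) in Hq by lra.
  assert (Hlny : Rabs (ln y) <= e / (2 * k) * y)
    by (apply Rmult_le_reg_r with (/ y); [apply Rinv_0_lt_compat; lra |
        rewrite Rmult_assoc, Rinv_r; lra]).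
  assert (Hck : Rabs c * (e / (2 * k)) <= e / 2).
  { apply Rle_trans with (k * (e / (2 * k))); [|right; field; lra].
    apply Rmult_le_compat_r; [lra | unfold k; lra]. }
  eapply Rle_trans; [apply Rabs_triang|]. rewrite Rabs_mult.
  assert (Rabs c * Rabs (ln y) <= Rabs c * (e / (2 * k) * y))
    by (apply Rmult_le_compat_l; [apply Rabs_pos | exact Hlny]).
  nra.
Qed.

Lemma sqrt_log_cut K A : 0 < K ->
  at_infty (fun t => 1 < t /\ 1 <= ln t /\ 1 <= sqrt (2 * K * ln t) <= t /\
    A <= sqrt (2 * K * ln t) ^ 2 / 2 /\ sqrt (2 * K * ln t) ^ 2 = 2 * K * ln t /\
    ln (sqrt (2 * K * ln t)) = / 2 * ln (2 * K) + / 2 * ln (ln t)).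
Proof.
  intros HK.
  assert (Hx : at_infty (fun x => (1 <= x /\ 1 <= 2 * K * x /\ A <= K * x) /\
      Rabs (ln (2 * K) + 1 * ln x) <= 1 * x)).
  { apply filter_and; [|apply ln_little_o; lra].
    repeat apply filter_and; [apply at_infty_ge | apply at_infty_ge_mul; lra ..]. }
  generalize (filter_and _ _ (at_infty_ln _ Hx) (at_infty_ge 2)). apply filter_imp.
  intros t [[[Hx1 [H2K HxA]] Hsmall] Ht]. set (x := ln t) in *.
  assert (Hsq : sqrt (2 * K * x) ^ 2 = 2 * K * x) by (rewrite <- Rsqr_pow2; apply Rsqr_sqrt; lra).
  repeat split; auto; try lra.
  - rewrite <- sqrt_1. apply sqrt_le_1_alt. lra.
  - rewrite <- (sqrt_Rsqr t) by lra. apply sqrt_le_1_alt. unfold Rsqr.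
    rewrite <- (exp_ln (2 * K * x)) by lra. rewrite <- (exp_ln t) at 1 2 by lra.
    rewrite <- exp_plus. apply exp_le. fold x.
    rewrite ln_mult by lra. apply Rabs_le_between in Hsmall. lra.
  - rewrite <- Rpower_sqrt, ln_Rpower, ln_mult by lra. ring.
Qed.

Lemma lim_infty_of_squeeze (h f L : R -> R) :
  at_infty (fun t => 0 < L t /\ h t = f t / L t) ->
  (forall delta, 0 < delta <= 1 / 2 ->
     at_infty (fun t => (1 - delta) * L t <= f t <= (1 + delta) * L t)) ->
  lim_infty h 1.
Proof.
  intros HL Hsq eps Heps.
  set (delta := Rmin (eps / 2) (1 / 2)).
  assert (Hd : 0 < delta <= 1 / 2 /\ delta < eps)
    by (unfold delta; pose proof (Rmin_l (eps / 2) (1 / 2)); pose proof (Rmin_r (eps / 2) (1 / 2));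
        pose proof (Rmin_glb_lt (eps / 2) (1 / 2) 0 ltac:(lra) ltac:(lra)); lra).
  destruct (filter_and _ _ HL (Hsq delta (proj1 Hd))) as [M HM].
  exists M. intros t Ht. destruct (HM t Ht) as [[HLt ->] Hf].
  apply Rabs_def1; apply Rmult_lt_reg_r with (L t); auto; unfold Rdiv;
    rewrite Rmult_minus_distr_r, Rmult_assoc, Rinv_l by lra; nra.
Qed.

(* Requirements on the cut point [T] of the integral over [0, t]: beyond [T] the tail asymptotics
   hold for every [l] between [(1 - delta) L] and [(1 + delta) L] (second to fourth clauses),
   the primitive [Phi] of the limiting profile is small at [T] (fifth), and the crude bound on
   [0, T] contributes less than [delta / 2 * W] (last). *)
Definition admissible_cut (beta W delta eps A C : R) (Phi : R -> R) (L t T : R) : Prop :=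
  1 <= T <= t /\ A <= T ^ 2 / 2 /\
  (1 + delta) * L <= 1 /\ - (eps * (T ^ 2 / 2)) <= ln ((1 - delta) * L) /\
  0 <= Phi T <= delta / 8 * Phi t /\
  (1 - delta) * L * C * Rpower T (1 + 2 * Rmax 0 ((1 - beta) / beta)) < delta / 2 * W.

Section Squeeze.

Variables (beta W delta kap eps A C : R) (g : R -> R -> R) (Phi : R -> R).
Let p := (1 - beta) / beta.
Hypotheses (Hbeta : 0 < beta) (HW : 0 < W) (Hdelta : 0 < delta <= 1 / 2)
  (Hkap : exp kap = 1 + delta / 2) (Heps : 0 < eps)
  (Hg0 : forall l tau, 0 <= g l tau)
  (Hgle : forall l1 l2 tau, l1 <= l2 -> g l1 tau <= g l2 tau)
  (Htail : forall l tau, 0 < l <= 1 -> - (eps * (tau ^ 2 / 2)) <= ln l -> A <= tau ^ 2 / 2 ->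
     l / beta * Rpower (tau ^ 2 / 2) p / exp kap <= g l tau <=
     l / beta * Rpower (tau ^ 2 / 2) p * exp kap)
  (Hhead : forall l tau T, 0 < l <= 1 -> 1 <= T -> 0 <= tau <= T ->
     g l tau <= l * C * Rpower T (2 * Rmax 0 p))
  (HPhi : forall x, 0 < x -> is_derive Phi x (Rpower x (2 * p))).

Lemma tail_power_bounds l T tau : 0 < l <= 1 -> 1 <= T <= tau ->
  - (eps * (T ^ 2 / 2)) <= ln l -> A <= T ^ 2 / 2 ->
  l / beta * Rpower 2 (- p) / exp kap * Rpower tau (2 * p) <= g l tau <=
  l / beta * Rpower 2 (- p) * exp kap * Rpower tau (2 * p).
Proof.
  intros Hl HT Hll HA.
  assert (HT2 : T ^ 2 / 2 <= tau ^ 2 / 2)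
    by (apply Rmult_le_compat_r; [lra | apply pow_incr; lra]).
  destruct (Htail l tau Hl ltac:(nra) ltac:(lra)) as [Hlo Hhi].
  rewrite Rpower_half_square in Hlo, Hhi by lra.
  split.
  - eapply Rle_trans, Hlo. right. field. split; [lra | apply Rgt_not_eq, exp_pos].
  - eapply Rle_trans; [exact Hhi|]. right. field. lra.
Qed.

Section Cut.

Variables (L t T l : R).
Hypotheses (Hcut : admissible_cut beta W delta eps A C Phi L t T) (HL : 0 < L)
  (Hnorm : L * Rpower 2 (- p) * Phi t / beta = W)
  (Hint : ex_RInt (g l) 0 t) (HintW : RInt (g l) 0 t = W).

Lemma squeeze_lower : (1 - delta) * L <= l.
Proof.
  destruct Hcut as [HT [HA [Hup [Hlow [HPhiT Hhead_small]]]]].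
  destruct (Rle_lt_dec ((1 - delta) * L) l) as [Hle | Hlt]; [exact Hle | exfalso].
  set (l1 := (1 - delta) * L) in *.
  assert (Hl1 : 0 < l1 <= 1) by (unfold l1; split; nra).
  destruct (RInt_split (g l) t T ltac:(lra) Hint) as [I1 [I2 Isplit]].
  set (E := Rpower T (2 * Rmax 0 p)).
  assert (Hhead_int : RInt (g l) 0 T <= T * (l1 * C * E)).
  { rewrite <- (Rmult_comm (l1 * C * E)).
    replace (l1 * C * E * T) with (RInt (fun _ => l1 * C * E) 0 T)
      by (rewrite RInt_const; unfold scal; simpl; unfold mult; simpl; ring).
    apply RInt_le; auto; [lra | apply ex_RInt_const|].
    intros tau Htau. eapply Rle_trans; [apply Hgle, Rlt_le, Hlt|].
    apply Hhead; lra. }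
  assert (HTE : T * (l1 * C * E) = l1 * C * Rpower T (1 + 2 * Rmax 0 p))
    by (unfold E; rewrite Rpower_plus, Rpower_1 by lra; ring).
  set (K := l1 / beta * Rpower 2 (- p) * exp kap).
  pose proof (is_RInt_Rpower Phi (2 * p) K T t ltac:(lra) HPhi) as IK.
  assert (Htail_int : RInt (g l) T t <= K * (Phi t - Phi T)).
  { rewrite <- (is_RInt_unique _ _ _ _ IK).
    apply RInt_le; auto; [lra | eexists; eauto |].
    intros tau Htau. eapply Rle_trans; [apply Hgle, Rlt_le, Hlt|].
    apply (tail_power_bounds l1 T tau); auto; lra. }
  assert (HK : K * Phi t = (1 - delta) * (1 + delta / 2) * W)
    by (unfold K, l1; rewrite <- Hkap, <- Hnorm; field; lra).
  assert (HK0 : 0 <= K) by (unfold K; apply Rmult_le_pos;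
    [apply Rmult_le_pos; [apply Rdiv_le_0_compat; lra | left; apply exp_pos] |
     left; apply exp_pos]).
  assert (K * Phi T >= 0) by (apply Rle_ge, Rmult_le_pos; lra).
  assert (0 < delta * delta * W) by (apply Rmult_lt_0_compat; nra).
  (* head < delta/2 W and tail <= (1 - delta)(1 + delta/2) W add up to less than W *)
  fold p in Hhead_small. nra.
Qed.

Lemma squeeze_upper : l <= (1 + delta) * L.
Proof.
  destruct Hcut as [HT [HA [Hup [Hlow [HPhiT Hhead_small]]]]].
  destruct (Rle_lt_dec l ((1 + delta) * L)) as [Hle | Hlt]; [exact Hle | exfalso].
  set (l0 := (1 + delta) * L) in *.
  assert (Hl0 : 0 < l0 <= 1) by (split; [unfold l0; nra | lra]).
  assert (Hll0 : - (eps * (T ^ 2 / 2)) <= ln l0)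
    by (eapply Rle_trans; [exact Hlow | apply ln_le; unfold l0; nra]).
  destruct (RInt_split (g l) t T ltac:(lra) Hint) as [I1 [I2 Isplit]].
  assert (Hhead_int : 0 <= RInt (g l) 0 T) by (apply RInt_ge_0; auto; lra).
  set (K := l0 / beta * Rpower 2 (- p) / exp kap).
  pose proof (is_RInt_Rpower Phi (2 * p) K T t ltac:(lra) HPhi) as IK.
  assert (Htail_int : K * (Phi t - Phi T) <= RInt (g l) T t).
  { rewrite <- (is_RInt_unique _ _ _ _ IK).
    apply RInt_le; auto; [lra | eexists; eauto |].
    intros tau Htau. eapply Rle_trans; [|apply Hgle, Rlt_le, Hlt].
    apply (tail_power_bounds l0 T tau); auto; lra. }
  assert (HK : K * Phi t * (1 + delta / 2) = (1 + delta) * W)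
    by (unfold K, l0; rewrite <- Hkap, <- Hnorm; field; split; [lra | apply Rgt_not_eq, exp_pos]).
  assert (HK0 : 0 <= K) by (unfold K; apply Rdiv_le_0_compat;
    [apply Rmult_le_pos; [apply Rdiv_le_0_compat; lra | left; apply exp_pos] | apply exp_pos]).
  assert (K * Phi T <= K * (delta / 8 * Phi t)) by (apply Rmult_le_compat_l; lra).
  assert (0 < delta * W) by (apply Rmult_lt_0_compat; lra).
  (* the tail alone is at least (1 + delta)(1 - delta/8) / (1 + delta/2) W > W *)
  nra.
Qed.

End Cut.

End Squeeze.

Lemma head_clause_of_ln delta L C T e W : delta < 1 -> 0 < L -> 0 < C -> 0 < T -> 0 < W ->
  ln (1 - delta) + ln L + ln C + e * ln T < ln W -> (1 - delta) * L * C * Rpower T e < W.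
Proof.
  intros Hd HL HC HT HW Hln.
  assert (HE : 0 < Rpower T e) by apply exp_pos.
  assert (H1 : 0 < (1 - delta) * L) by (apply Rmult_lt_0_compat; lra).
  assert (H2 : 0 < (1 - delta) * L * C) by (apply Rmult_lt_0_compat; lra).
  apply ln_lt_inv; [apply Rmult_lt_0_compat; lra | lra |].
  rewrite (ln_mult _ (Rpower T e)), (ln_mult _ C), (ln_mult (1 - delta) L), ln_Rpower by lra.
  exact Hln.
Qed.

Lemma subcritical_exponent_pos beta : 0 < beta < 2 -> 0 < 2 / beta - 1.
Proof.
  intros Hbeta. enough (1 < 2 / beta) by lra.
  apply Rmult_lt_reg_r with beta; [lra|]. unfold Rdiv. rewrite Rmult_assoc, Rinv_l; lra.
Qed.

Lemma c_beta_pos beta : beta < 2 -> 0 < c_beta beta.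
Proof.
  intros Hb. unfold c_beta. apply Rmult_lt_0_compat; [apply Rmult_lt_0_compat|]; try lra.
  apply exp_pos. apply sqrt_lt_R0, PI_RGT_0.
Qed.

Lemma c_beta_normalization beta t : 0 < beta < 2 -> 0 < t ->
  c_beta beta * Rpower t (1 - 2 / beta) * Rpower 2 (- ((1 - beta) / beta)) *
    (Rpower t (2 / beta - 1) / (2 / beta - 1)) / beta = sqrt (2 * PI).
Proof.
  intros Hbeta Ht. unfold c_beta.
  rewrite sqrt_mult, <- !Rpower_sqrt by (try lra; pose proof PI_RGT_0; lra).
  replace (Rpower 2 (1 / beta - 1 / 2)) with (Rpower 2 (/ 2) * Rpower 2 ((1 - beta) / beta))
    by (rewrite <- Rpower_plus; f_equal; field; lra).
  rewrite Rpower_Ropp.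
  replace (Rpower t (1 - 2 / beta)) with (/ Rpower t (2 / beta - 1))
    by (rewrite <- Rpower_Ropp; f_equal; ring).
  pose proof (subcritical_exponent_pos beta Hbeta).
  field. repeat split; try lra; apply Rgt_not_eq, exp_pos.
Qed.

Lemma cut_subcritical beta delta eps A C : 0 < beta < 2 -> 0 < delta <= 1 / 2 ->
  0 < eps < 1 -> 0 < C -> exists T : R -> R,
  at_infty (fun t => admissible_cut beta (sqrt (2 * PI)) delta eps A C
    (fun x => Rpower x (2 / beta - 1) / (2 / beta - 1)) (c_beta beta * Rpower t (1 - 2 / beta))
    t (T t)).
Proof.
  intros Hbeta Hdelta Heps HC.
  set (q := 2 / beta - 1).
  assert (Hq : 0 < q) by now apply subcritical_exponent_pos.
  set (c := c_beta beta). assert (Hc : 0 < c) by (apply c_beta_pos; lra).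
  set (W := sqrt (2 * PI)). assert (HW : 0 < W) by (apply sqrt_lt_R0; pose proof PI_RGT_0; lra).
  set (m := Rmax 0 ((1 - beta) / beta)). assert (Hm : 0 <= m) by apply Rmax_l.
  set (K := (q + 1) / eps). assert (HK : 0 < K) by (apply Rdiv_lt_0_compat; lra).
  (* With [x = ln t] and [T^2 = 2 K x] every requirement becomes a lower bound on [x] or an
     inequality [a + c ln x <= e x]; [eps K = q + 1] puts [- eps T^2 / 2 = -(q + 1) x] below
     [ln L(t) = ln c - q x]. *)
  assert (Hx : at_infty (fun x =>
      (ln (1 + delta) + ln c <= q * x /\ - (ln (1 - delta) + ln c) <= x) /\
      Rabs ((q / 2 * ln (2 * K) - ln (delta / 8)) + q / 2 * ln x) <= q * x /\
      Rabs ((ln (1 - delta) + ln c + ln C - ln (delta / 2 * W) + (1 + 2 * m) / 2 * ln (2 * K))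
        + (1 + 2 * m) / 2 * ln x) <= q / 2 * x)).
  { repeat apply filter_and; try apply at_infty_ge; try apply at_infty_ge_mul;
      try apply ln_little_o; lra. }
  exists (fun t => sqrt (2 * K * ln t)).
  generalize (filter_and _ _ (sqrt_log_cut K A HK) (at_infty_ln _ Hx)). apply filter_imp.
  intros t [[Ht1 [Hx1 [HT [HA [HT2 HlnT]]]]] [[Hc1 Hc2] [Hc3 Hc4]]].
  set (x := ln t) in *. set (T := sqrt (2 * K * x)) in *.
  set (L := c * Rpower t (1 - 2 / beta)).
  assert (HL : 0 < L) by (apply Rmult_lt_0_compat; [lra | apply exp_pos]).
  assert (HlnL : ln L = ln c - q * x)
    by (unfold L; rewrite ln_mult, ln_Rpower by (try lra; apply exp_pos); unfold q; fold x; ring).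
  apply Rabs_le_between in Hc3, Hc4.
  unfold admissible_cut. fold W m. cbv beta. repeat split; try lra.
  - apply le_of_ln_le; [nra | lra |]. rewrite ln_mult, HlnL, ln_1 by lra. lra.
  - rewrite HT2, ln_mult, HlnL by lra.
    replace (eps * (2 * K * x / 2)) with ((q + 1) * x) by (unfold K; field; lra). lra.
  - apply Rdiv_le_0_compat; [left; apply exp_pos | lra].
  - unfold Rdiv. rewrite <- Rmult_assoc.
    apply Rmult_le_compat_r; [left; apply Rinv_0_lt_compat; lra|].
    apply le_of_ln_le; [apply exp_pos | apply Rmult_lt_0_compat; [lra | apply exp_pos]|].
    rewrite ln_mult, !ln_Rpower, HlnT by (try lra; apply exp_pos). fold q x. lra.
  - apply head_clause_of_ln; [lra | lra | lra | lra | nra |]. rewrite HlnL, HlnT. nra.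
Qed.

Lemma cut_critical delta eps A C : 0 < delta <= 1 / 2 -> 0 < eps < 1 -> 0 < C ->
  exists T : R -> R,
  at_infty (fun t =>
    admissible_cut 2 (sqrt (2 * PI)) delta eps A C ln (2 * sqrt PI / ln t) t (T t)).
Proof.
  intros Hdelta Heps HC.
  set (c := 2 * sqrt PI).
  assert (Hc : 0 < c) by (unfold c; pose proof (sqrt_lt_R0 PI PI_RGT_0); lra).
  set (W := sqrt (2 * PI)). assert (HW : 0 < W) by (apply sqrt_lt_R0; pose proof PI_RGT_0; lra).
  set (K := 1 / eps). assert (HK : 0 < K) by (apply Rdiv_lt_0_compat; lra).
  set (a := ln (1 - delta) + ln c + ln C + / 2 * ln (2 * K) - ln (delta / 2 * W)).
  assert (Hx : at_infty (fun x => (1 + delta) * c <= x /\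
      Rabs (- (ln (1 - delta) + ln c) + 1 * ln x) <= 1 * x /\
      Rabs (/ 2 * ln (2 * K) + / 2 * ln x) <= delta / 8 * x /\ 2 * a < ln x)).
  { repeat apply filter_and; try apply at_infty_ge; try (apply ln_little_o; lra).
    generalize (at_infty_ln _ (at_infty_ge (2 * a + 1))). apply filter_imp. intros; lra. }
  exists (fun t => sqrt (2 * K * ln t)).
  generalize (filter_and _ _ (sqrt_log_cut K A HK) (at_infty_ln _ Hx)). apply filter_imp.
  intros t [[Ht1 [Hx1 [HT [HA [HT2 HlnT]]]]] [Hc1 [Hc2 [Hc3 Hc4]]]].
  set (x := ln t) in *. set (T := sqrt (2 * K * x)) in *.
  assert (HlnL : ln (c / x) = ln c - ln x)
    by (unfold Rdiv; rewrite ln_mult, ln_Rinv by (try apply Rinv_0_lt_compat; lra); ring).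
  assert (HcL : 0 < c / x) by (apply Rdiv_lt_0_compat; lra).
  apply Rabs_le_between in Hc2, Hc3.
  unfold admissible_cut. fold W x. repeat split; try lra.
  - apply Rmult_le_reg_r with x; [lra|]. unfold Rdiv.
    rewrite Rmult_assoc, (Rmult_assoc c), Rinv_l by lra. lra.
  - rewrite HT2, ln_mult, HlnL by lra.
    replace (eps * (2 * K * x / 2)) with x by (unfold K; field; lra). lra.
  - rewrite <- ln_1. apply ln_le; lra.
  - rewrite Rmax_left by lra. apply head_clause_of_ln; [lra | lra | lra | lra | nra |].
    rewrite HlnL, HlnT. unfold a in Hc4. lra.
Qed.

Section GeneralizedInverse.

Variables b binv : R -> R.
Hypothesis Hbinv : is_gen_inv b binv.

Lemma binv_ge0 s : 0 <= binv s.
Proof. destruct (Hbinv s) as [_ Hglb]. apply Hglb. now intros x [Hx _]. Qed.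

Lemma b_lt_of_lt_binv s x : 0 <= x -> x < binv s -> b x < s.
Proof.
  intros Hx Hlt. destruct (Rlt_le_dec (b x) s) as [Hb | Hb]; auto.
  destruct (Hbinv s) as [Hlb _]. specialize (Hlb x (conj Hx Hb)). lra.
Qed.

Lemma binv_approx s h : 0 < h ->
  exists x, binv s <= x < binv s + h /\ 0 <= x /\ s <= b x.
Proof.
  intros Hh. apply NNPP; intros Hno.
  destruct (Hbinv s) as [Hlb Hglb].
  enough (binv s + h <= binv s) by lra.
  apply Hglb. intros x Hx.
  destruct (Rlt_le_dec x (binv s + h)) as [Hlt | Hle]; auto.
  exfalso; apply Hno. exists x. pose proof (Hlb x Hx). destruct Hx. repeat split; lra.
Qed.

Lemma binv_le s1 s2 : s1 <= s2 -> binv s1 <= binv s2.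
Proof.
  intros Hs. destruct (Hbinv s2) as [_ Hglb]. apply Hglb.
  intros x [Hx Hb]. destruct (Hbinv s1) as [Hlb _]. apply Hlb. split; lra.
Qed.

Hypothesis Hbmono : nondecr_on_nonneg b.

Lemma le_b_of_binv_lt s z : binv s < z -> s <= b z.
Proof.
  intros Hz. destruct (binv_approx s (z - binv s)) as [x [Hxz [Hx Hbx]]]; [lra|].
  apply (Rle_trans _ _ _ Hbx), Hbmono; lra.
Qed.

Lemma binv_gt s r : 0 <= r -> b (r + 1) < s -> r < binv s.
Proof.
  intros Hr Hs. destruct (Rlt_le_dec r (binv s)) as [Hlt | Hle]; auto.
  pose proof (le_b_of_binv_lt s (r + 1)). lra.
Qed.

End GeneralizedInverse.

Section Primitive.

Variables B b : R -> R.
Hypothesis HBint : forall t, 0 <= t ->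
  exists pr : Riemann_integrable b 0 t, RiemannInt pr = B t.

Lemma B_sub_RInt x y : 0 <= x <= y -> ex_RInt b x y /\ B y - B x = RInt b x y.
Proof.
  intros Hxy.
  destruct (HBint x ltac:(lra)) as [prx Ex], (HBint y ltac:(lra)) as [pry Ey].
  pose proof (ex_RInt_Reals_1 _ _ _ prx) as Ix.
  pose proof (ex_RInt_Reals_1 _ _ _ pry) as Iy.
  assert (Ixy : ex_RInt b x y) by now apply (ex_RInt_Chasles_2 b 0).
  split; auto.
  rewrite <- Ex, <- Ey, <- (RInt_Reals _ _ _ prx), <- (RInt_Reals _ _ _ pry).
  rewrite <- (RInt_Chasles b 0 x y Ix Ixy). unfold plus; simpl. ring.
Qed.

Lemma B_sub_le x y c : 0 <= x <= y -> (forall z, x < z < y -> b z <= c) ->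
  B y - B x <= c * (y - x).
Proof.
  intros Hxy Hc. destruct (B_sub_RInt x y Hxy) as [I ->].
  replace (c * (y - x)) with (RInt (fun _ => c) x y)
    by (rewrite RInt_const; unfold scal; simpl; unfold mult; simpl; ring).
  apply RInt_le; auto; [lra | apply ex_RInt_const].
Qed.

Lemma B_sub_ge x y c : 0 <= x <= y -> (forall z, x < z < y -> c <= b z) ->
  c * (y - x) <= B y - B x.
Proof.
  intros Hxy Hc. destruct (B_sub_RInt x y Hxy) as [I ->].
  replace (c * (y - x)) with (RInt (fun _ => c) x y)
    by (rewrite RInt_const; unfold scal; simpl; unfold mult; simpl; ring).
  apply RInt_le; auto; [lra | apply ex_RInt_const].
Qed.

Variable binv : R -> R.
Hypotheses (HY : young B) (Hbmono : nondecr_on_nonneg b) (Hbinv : is_gen_inv b binv).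

Lemma b_ge0 z : 0 < z -> 0 <= b z.
Proof.
  intros Hz. destruct HY as [HB0 [HBge0 _]].
  pose proof (B_sub_le 0 z (b z) ltac:(lra) (fun w Hw => Hbmono w z ltac:(lra) ltac:(lra))).
  pose proof (HBge0 z ltac:(lra)). rewrite HB0 in *.
  destruct (Rle_dec 0 (b z)); auto. nra.
Qed.

Lemma B_le x y : 0 <= x <= y -> B x <= B y.
Proof.
  intros Hxy. pose proof (B_sub_ge x y 0 Hxy (fun z Hz => b_ge0 z ltac:(lra))). lra.
Qed.

Lemma B_binv_le s1 s2 : s1 <= s2 -> B (binv s1) <= B (binv s2).
Proof. intros Hs. apply B_le. split; [apply (binv_ge0 b) | apply (binv_le b)]; auto. Qed.

Lemma B_binv_le_mul s : B (binv s) <= s * binv s.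
Proof.
  destruct HY as [HB0 _]. pose proof (binv_ge0 b binv Hbinv s).
  pose proof (B_sub_le 0 (binv s) s ltac:(lra)
    (fun z Hz => Rlt_le _ _ (b_lt_of_lt_binv b binv Hbinv s z ltac:(lra) ltac:(lra)))).
  rewrite HB0 in *. lra.
Qed.

Lemma binv_eq_derivative s l : 0 < binv s -> derivable_pt_lim B (binv s) l -> s = l.
Proof.
  intros Hr HB. symmetry. apply (derivable_pt_lim_squeeze B (binv s) l s (binv s) Hr HB).
  - intros h Hh. pose proof (B_sub_le (binv s - h) (binv s) s ltac:(lra)
      (fun z Hz => Rlt_le _ _ (b_lt_of_lt_binv b binv Hbinv s z ltac:(lra) ltac:(lra)))).
    lra.
  - intros h Hh. pose proof (B_sub_ge (binv s) (binv s + h) s ltac:(lra)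
      (fun z Hz => le_b_of_binv_lt b binv Hbinv Hbmono s z ltac:(lra))).
    lra.
Qed.

End Primitive.

Definition lambda_integrand (B binv : R -> R) (l tau : R) : R :=
  B (binv (l * exp (tau ^ 2 / 2))) * exp (- (tau ^ 2 / 2)).

Section ExponentialYoung.

Variables (beta N t0 : R) (B b binv : R -> R).
Hypotheses (Hbeta : 0 < beta) (HN : 0 < N) (Ht0 : 0 < t0) (HY : young B)
  (HBexp : forall t, t0 < t -> B t = N * exp (Rpower t beta))
  (Hbmono : nondecr_on_nonneg b)
  (HBint : forall t, 0 <= t -> exists pr : Riemann_integrable b 0 t, RiemannInt pr = B t)
  (Hbinv : is_gen_inv b binv).

Lemma binv_derivative_eq s : t0 < binv s ->
  s = N * beta * Rpower (binv s) (beta - 1) * exp (Rpower (binv s) beta).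
Proof.
  intros Hr. apply (binv_eq_derivative B b HBint binv Hbmono Hbinv); [lra|].
  apply is_derive_Reals.
  apply (is_derive_ext_loc (fun t => N * exp (Rpower t beta))).
  { generalize (open_gt t0 (binv s) Hr). apply filter_imp.
    intros t Ht. symmetry. now apply HBexp. }
  unfold Rpower. auto_derive; [lra|].
  replace ((beta - 1) * ln (binv s)) with (beta * ln (binv s) + - ln (binv s)) by ring.
  rewrite exp_plus, exp_Ropp, exp_ln by lra. field. lra.
Qed.

Lemma B_binv_eq s : t0 < binv s -> B (binv s) = s * Rpower (binv s) (1 - beta) / beta.
Proof.
  intros Hr. pose proof (binv_derivative_eq s Hr) as Hs.
  rewrite HBexp by lra. set (r := binv s) in *. rewrite Hs.
  replace (N * beta * Rpower r (beta - 1) * exp (Rpower r beta) * Rpower r (1 - beta) / beta)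
    with (N * exp (Rpower r beta) * (Rpower r (beta - 1) * Rpower r (1 - beta)))
    by (field; lra).
  rewrite <- Rpower_plus. replace (beta - 1 + (1 - beta)) with 0 by ring.
  rewrite Rpower_O by lra. ring.
Qed.

Lemma ln_of_binv_pow s : t0 < binv s ->
  ln s = Rpower (binv s) beta + (ln (N * beta) + (beta - 1) / beta * ln (Rpower (binv s) beta)).
Proof.
  intros Hr. pose proof (binv_derivative_eq s Hr) as Hs.
  set (r := binv s) in *. rewrite Hs at 1.
  assert (Hpos : forall x, 0 < Rpower r x) by (intros; apply exp_pos).
  assert (HNb : 0 < N * beta) by (apply Rmult_lt_0_compat; lra).
  rewrite !ln_mult by (auto; try apply Rmult_lt_0_compat; auto; apply exp_pos).
  rewrite ln_exp, !ln_Rpower. field. lra.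
Qed.

Lemma binv_pow_large Y : at_infty (fun s => t0 < binv s /\ Y <= Rpower (binv s) beta).
Proof.
  set (r := Rmax t0 (Rpower (Rmax Y 1) (/ beta))).
  assert (Hr : 0 <= r) by (unfold r; pose proof (Rmax_l t0 (Rpower (Rmax Y 1) (/ beta))); lra).
  exists (b (r + 1)). intros s Hs.
  pose proof (binv_gt b binv Hbinv Hbmono s r Hr Hs) as Hrs.
  pose proof (Rmax_l t0 (Rpower (Rmax Y 1) (/ beta))) as Ht0r.
  pose proof (Rmax_r t0 (Rpower (Rmax Y 1) (/ beta))) as HYr.
  fold r in Ht0r, HYr.
  split; [lra|].
  apply Rle_trans with (Rpower r beta).
  - apply Rle_trans with (Rpower (Rpower (Rmax Y 1) (/ beta)) beta).
    + rewrite Rpower_mult, Rinv_l, Rpower_1 by (try lra; pose proof (Rmax_r Y 1); lra).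
      apply Rmax_l.
    + apply Rle_Rpower_l; [lra | split; [apply exp_pos | apply HYr]].
  - apply Rle_Rpower_l; lra.
Qed.

Lemma binv_asymptotic eps : 0 < eps <= 1 ->
  at_infty (fun s => t0 < binv s /\ B (binv s) = s * Rpower (binv s) (1 - beta) / beta /\
    (1 - eps) * ln s <= Rpower (binv s) beta <= (1 + eps) * ln s).
Proof.
  intros Heps.
  destruct (ln_little_o (ln (N * beta)) ((beta - 1) / beta) (eps / 2) ltac:(lra)) as [Y HY'].
  generalize (binv_pow_large (Rmax 1 (Y + 1))). apply filter_imp. intros s [Hr Hy].
  pose proof (Rmax_l 1 (Y + 1)). pose proof (Rmax_r 1 (Y + 1)).
  split; [auto|]. split; [now apply B_binv_eq|].
  rewrite (ln_of_binv_pow s Hr).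
  set (y := Rpower (binv s) beta) in *.
  pose proof (HY' y ltac:(lra)) as Hsmall.
  set (c := ln (N * beta) + (beta - 1) / beta * ln y) in *.
  apply Rabs_le_between in Hsmall.
  assert ((1 - eps) * (y + c) <= (1 - eps) * ((1 + eps / 2) * y))
    by (apply Rmult_le_compat_l; lra).
  assert ((1 + eps) * ((1 - eps / 2) * y) <= (1 + eps) * (y + c))
    by (apply Rmult_le_compat_l; lra).
  assert (0 <= eps * (1 - eps) * y) by (apply Rmult_le_pos; [apply Rmult_le_pos|]; lra).
  split; nra.
Qed.

Let g := lambda_integrand B binv.
Let p := (1 - beta) / beta.

Lemma lambda_integrand_ge0 l tau : 0 <= g l tau.
Proof.
  destruct HY as [_ [HBge0 _]]. apply Rmult_le_pos; [|left; apply exp_pos].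
  apply HBge0, (binv_ge0 b binv Hbinv).
Qed.

Lemma lambda_integrand_le l1 l2 tau : l1 <= l2 -> g l1 tau <= g l2 tau.
Proof.
  intros Hl. apply Rmult_le_compat_r; [left; apply exp_pos|].
  apply (B_binv_le B b HBint binv HY Hbmono Hbinv).
  apply Rmult_le_compat_r; [left; apply exp_pos | lra].
Qed.

Lemma lambda_integrand_le_mul_binv l tau : 0 < l ->
  g l tau <= l * binv (l * exp (tau ^ 2 / 2)).
Proof.
  intros Hl. unfold g, lambda_integrand. set (v := tau ^ 2 / 2).
  apply Rle_trans with (l * exp v * binv (l * exp v) * exp (- v)).
  - apply Rmult_le_compat_r; [left; apply exp_pos|].
    apply (B_binv_le_mul B b HBint binv HY Hbinv).
  - right. rewrite exp_Ropp. field. apply Rgt_not_eq, exp_pos.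
Qed.

Lemma lambda_integrand_power_form eps : 0 < eps <= 1 -> exists M, forall l tau,
  M < l * exp (tau ^ 2 / 2) -> exists y,
    (1 - eps) * ln (l * exp (tau ^ 2 / 2)) <= y <= (1 + eps) * ln (l * exp (tau ^ 2 / 2)) /\
    g l tau = l / beta * Rpower y p.
Proof.
  intros Heps. destruct (binv_asymptotic eps Heps) as [M HM].
  exists M. intros l tau Hs. set (s := l * exp (tau ^ 2 / 2)) in *.
  destruct (HM s Hs) as [Hr [HB Hy]].
  exists (Rpower (binv s) beta). split; [exact Hy|].
  unfold g, lambda_integrand. fold s. rewrite HB, Rpower_mult.
  unfold p. replace (beta * ((1 - beta) / beta)) with (1 - beta) by (field; lra).
  unfold s. rewrite exp_Ropp. field. split; [lra | apply Rgt_not_eq, exp_pos].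
Qed.

Lemma lambda_integrand_tail kap : 0 < kap -> exists eps A, 0 < eps < 1 /\ 0 < A /\
  forall l tau, 0 < l <= 1 -> - (eps * (tau ^ 2 / 2)) <= ln l -> A <= tau ^ 2 / 2 ->
    l / beta * Rpower (tau ^ 2 / 2) p / exp kap <= g l tau <=
    l / beta * Rpower (tau ^ 2 / 2) p * exp kap.
Proof.
  intros Hkap. assert (Hp : 0 <= Rabs p) by apply Rabs_pos.
  destruct (exists_small_factor kap (Rabs p) Hkap Hp) as [eps [Heps Hpeps]].
  destruct (lambda_integrand_power_form eps ltac:(lra)) as [M HM].
  (* this [A] gives [ln s >= (1 - eps) A = |M| + 1], so [s] is beyond the threshold [M] *)
  assert (HA : 0 < (Rabs M + 1) / (1 - eps))
    by (apply Rdiv_lt_0_compat; [pose proof (Rabs_pos M) |]; lra).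
  exists eps, ((Rabs M + 1) / (1 - eps)). split; [lra|]. split; [exact HA|].
  intros l tau Hl Hll Hv.
  assert (Hlns : ln (l * exp (tau ^ 2 / 2)) = ln l + tau ^ 2 / 2)
    by (rewrite ln_mult, ln_exp; [reflexivity | lra | apply exp_pos]).
  set (v := tau ^ 2 / 2) in *. set (s := l * exp v) in *.
  assert (Hl1 : ln l <= 0) by (rewrite <- ln_1; apply ln_le; lra).
  assert (HsM : M < s).
  { apply lt_of_ln_ge; [apply Rmult_lt_0_compat; [lra | apply exp_pos]|].
    apply Rmult_le_compat_l with (r := 1 - eps) in Hv; [|lra].
    replace ((1 - eps) * ((Rabs M + 1) / (1 - eps))) with (Rabs M + 1) in Hv by (field; lra).
    nra. }
  destruct (HM l tau HsM) as [y [[Hylo Hyhi] ->]]. fold v s in Hylo, Hyhi.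
  assert (Hratio : Rabs (p * ln y - p * ln v) <= kap).
  { replace (p * ln y - p * ln v) with (p * (ln y - ln v)) by ring. rewrite Rabs_mult.
    apply Rle_trans with (Rabs p * (4 * eps)); [|lra].
    apply Rmult_le_compat_l; [lra|]. apply ln_ratio_bound; [lra | lra |].
    split; nra. }
  apply Rabs_le_between in Hratio.
  assert (Hlb : 0 < l / beta) by (apply Rdiv_lt_0_compat; lra).
  unfold Rpower.
  replace (l / beta * exp (p * ln v) / exp kap) with (l / beta * exp (p * ln v + - kap))
    by (rewrite exp_plus, exp_Ropp; field; split; [lra | apply Rgt_not_eq, exp_pos]).
  rewrite Rmult_assoc, <- exp_plus.
  split; apply Rmult_le_compat_l; try lra; apply exp_le; lra.
Qed.

Lemma lambda_integrand_head : exists C, 0 < C /\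
  forall l tau T, 0 < l <= 1 -> 1 <= T -> 0 <= tau <= T ->
    g l tau <= l * C * Rpower T (2 * Rmax 0 p).
Proof.
  destruct (lambda_integrand_power_form (1 / 2) ltac:(lra)) as [M HM].
  set (S := Rmax M (exp 2)). set (C := binv S + 1 / beta).
  assert (HbS : 0 <= binv S) by apply (binv_ge0 b binv Hbinv).
  assert (Hb : 0 < 1 / beta) by (apply Rdiv_lt_0_compat; lra).
  exists C. split; [unfold C; lra|].
  intros l tau T Hl HT Htau.
  set (E := Rpower T (2 * Rmax 0 p)).
  assert (HE : 1 <= E).
  { unfold E. rewrite <- (Rpower_O T) by lra. apply Rle_Rpower; [lra|].
    pose proof (Rmax_l 0 p). lra. }
  set (v := tau ^ 2 / 2). set (s := l * exp v).
  assert (Hs : 0 < s) by (unfold s; apply Rmult_lt_0_compat; [lra | apply exp_pos]).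
  destruct (Rle_lt_dec s S) as [HsS | HsS].
  - apply Rle_trans with (l * binv S).
    + eapply Rle_trans; [apply lambda_integrand_le_mul_binv; lra|].
      apply Rmult_le_compat_l; [lra|]. now apply (binv_le b).
    + rewrite Rmult_assoc. apply Rmult_le_compat_l; [lra|].
      assert (0 <= C * (E - 1)) by (apply Rmult_le_pos; unfold C; lra).
      assert (binv S <= C) by (unfold C; lra). nra.
  - pose proof (Rmax_l M (exp 2)) as HMS. pose proof (Rmax_r M (exp 2)) as HeS. fold S in HMS, HeS.
    destruct (HM l tau ltac:(fold v s; lra)) as [y [[Hylo Hyhi] ->]]. fold v s in Hylo, Hyhi.
    assert (Hlns : 2 <= ln s) by (rewrite <- (ln_exp 2); apply ln_le; [apply exp_pos | lra]).
    assert (Hsv : ln s <= v).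
    { unfold s. rewrite ln_mult, ln_exp by (try lra; apply exp_pos).
      assert (ln l <= 0) by (rewrite <- ln_1; apply ln_le; lra). lra. }
    assert (HvT : v <= T ^ 2 / 2)
      by (unfold v; apply Rmult_le_compat_r; [lra|]; apply pow_incr; lra).
    assert (Hy : 1 <= y <= T ^ 2) by (pose proof (pow_le T 2 ltac:(lra)); lra).
    assert (Hyp : Rpower y p <= E).
    { apply Rle_trans with (Rpower y (Rmax 0 p)); [apply Rle_Rpower; [lra | apply Rmax_r]|].
      assert (HT2 : Rpower T 2 = T ^ 2)
        by (rewrite <- Rpower_pow by lra; simpl (INR 2); f_equal; ring).
      unfold E. rewrite <- Rpower_mult, HT2.
      apply Rle_Rpower_l; [apply Rmax_l | lra]. }
    replace (l / beta * Rpower y p) with (l * (1 / beta) * Rpower y p) by (field; lra).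
    rewrite !Rmult_assoc. apply Rmult_le_compat_l; [lra|].
    apply Rmult_le_compat; [lra | left; apply exp_pos | unfold C; lra | exact Hyp].
Qed.

Variable lam : R -> R.
Hypothesis Hlam : forall t, 0 < t -> 0 < lam t /\
  exists pr : Riemann_integrable
      (fun tau => B (binv (lam t * exp (tau ^ 2 / 2))) * exp (- (tau ^ 2 / 2))) 0 t,
    RiemannInt pr = sqrt (2 * PI).

Lemma lam_integral t : 0 < t ->
  ex_RInt (g (lam t)) 0 t /\ RInt (g (lam t)) 0 t = sqrt (2 * PI).
Proof.
  intros Ht. destruct (Hlam t Ht) as [_ [pr Hpr]].
  split; [exact (ex_RInt_Reals_1 _ _ _ pr) | rewrite <- Hpr; apply (RInt_Reals _ _ _ pr)].
Qed.

Lemma lam_squeeze (Phi L : R -> R) delta : 0 < delta <= 1 / 2 ->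
  (forall x, 0 < x -> is_derive Phi x (Rpower x (2 * p))) ->
  (forall t, 1 < t -> 0 < L t /\ L t * Rpower 2 (- p) * Phi t / beta = sqrt (2 * PI)) ->
  (forall eps A C, 0 < eps < 1 -> 0 < A -> 0 < C -> exists T : R -> R,
     at_infty (fun t => admissible_cut beta (sqrt (2 * PI)) delta eps A C Phi (L t) t (T t))) ->
  at_infty (fun t => (1 - delta) * L t <= lam t <= (1 + delta) * L t).
Proof.
  intros Hdelta HPhi HL HT.
  set (kap := ln (1 + delta / 2)).
  assert (Hkap : exp kap = 1 + delta / 2) by (apply exp_ln; lra).
  assert (Hkap0 : 0 < kap) by (unfold kap; rewrite <- ln_1; apply ln_increasing; lra).
  assert (HW : 0 < sqrt (2 * PI)) by (apply sqrt_lt_R0; pose proof PI_RGT_0; lra).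
  destruct (lambda_integrand_tail kap Hkap0) as [eps [A [Heps [HA Htail]]]].
  destruct lambda_integrand_head as [C [HC Hhead]].
  destruct (HT eps A C Heps HA HC) as [T HTev].
  assert (Ht1 : at_infty (fun t => 1 < t)) by (exists 1; auto).
  generalize (filter_and _ _ HTev Ht1). apply filter_imp. intros t [Hcut Ht].
  destruct (HL t Ht) as [HLt Hnorm]. destruct (lam_integral t ltac:(lra)) as [I IW].
  split.
  - exact (squeeze_lower beta _ delta kap eps A C g Phi Hbeta HW Hdelta Hkap (proj1 Heps)
      lambda_integrand_le Htail Hhead HPhi (L t) t (T t) (lam t) Hcut HLt Hnorm I IW).
  - exact (squeeze_upper beta _ delta kap eps A C g Phi Hbeta HW Hdelta Hkap (proj1 Heps)
      lambda_integrand_ge0 lambda_integrand_le Htail HPhi (L t) t (T t) (lam t)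
      Hcut HLt Hnorm I IW).
Qed.

Lemma lam_subcritical : beta < 2 ->
  lim_infty (fun t => lam t / (c_beta beta * Rpower t (1 - 2 / beta))) 1.
Proof.
  intros Hlt.
  apply (lim_infty_of_squeeze _ lam (fun t => c_beta beta * Rpower t (1 - 2 / beta))).
  { exists 0. intros t _. split; [|reflexivity].
    apply Rmult_lt_0_compat; [now apply c_beta_pos | apply exp_pos]. }
  intros delta Hdelta.
  apply (lam_squeeze (fun x => Rpower x (2 / beta - 1) / (2 / beta - 1))); auto.
  - intros x Hx. replace (2 * p) with (2 / beta - 1 - 1) by (unfold p; field; lra).
    apply is_derive_Rpower_div; [|lra].
    pose proof (subcritical_exponent_pos beta (conj Hbeta Hlt)). lra.
  - intros t Ht. split.
    + apply Rmult_lt_0_compat; [now apply c_beta_pos | apply exp_pos].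
    + apply c_beta_normalization; lra.
  - intros eps A C Heps _ HC. apply cut_subcritical; auto; lra.
Qed.

Lemma lam_critical : beta = 2 -> lim_infty (fun t => lam t * ln t / (2 * sqrt PI)) 1.
Proof.
  intros Hb2.
  assert (Hc : 0 < 2 * sqrt PI) by (pose proof (sqrt_lt_R0 PI PI_RGT_0); lra).
  apply (lim_infty_of_squeeze _ lam (fun t => 2 * sqrt PI / ln t)).
  { exists 1. intros t Ht. assert (0 < ln t) by (rewrite <- ln_1; apply ln_increasing; lra).
    split; [apply Rdiv_lt_0_compat; lra | field; lra]. }
  intros delta Hdelta.
  apply (lam_squeeze ln); auto.
  - intros x Hx. unfold Rpower.
    replace (2 * p * ln x) with (- ln x) by (unfold p; rewrite Hb2; field).
    rewrite exp_Ropp, exp_ln by lra. now apply is_derive_ln.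
  - intros t Ht. assert (0 < ln t) by (rewrite <- ln_1; apply ln_increasing; lra).
    split; [apply Rdiv_lt_0_compat; lra|].
    replace (- p) with (/ 2) by (unfold p; rewrite Hb2; field).
    rewrite Rpower_sqrt, sqrt_mult by (try lra; pose proof PI_RGT_0; lra). rewrite Hb2. field. lra.
  - intros eps A C Heps _ HC. rewrite Hb2. now apply cut_critical.
Qed.

End ExponentialYoung.

Theorem lemma3p6
  (beta N t0 : R) (B b binv lam : R -> R)
  (Hbeta : 0 < beta <= 2) (HN : 0 < N) (Ht0 : 0 < t0)
  (HY : young B)
  (HBexp : forall t, t0 < t -> B t = N * exp (Rpower t beta))
  (Hbmono : nondecr_on_nonneg b)
  (Hblc : left_cont_pos b)
  (HBint : forall t, 0 <= t ->
     exists pr : Riemann_integrable b 0 t, RiemannInt pr = B t)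
  (Hbinv : is_gen_inv b binv)
  (Hlam : forall t, 0 < t -> 0 < lam t /\
     exists pr : Riemann_integrable
         (fun tau => B (binv (lam t * exp (tau ^ 2 / 2))) * exp (- (tau ^ 2 / 2))) 0 t,
       RiemannInt pr = sqrt (2 * PI)) :
  (beta < 2 ->
     lim_infty (fun t => lam t / (c_beta beta * Rpower t (1 - 2 / beta))) 1) /\
  (beta = 2 ->
     lim_infty (fun t => lam t * ln t / (2 * sqrt PI)) 1).
Proof.
  assert (Hbeta0 : 0 < beta) by lra.
  split.
  - exact (lam_subcritical beta N t0 B b binv Hbeta0 HN Ht0 HY HBexp Hbmono HBint Hbinv lam Hlam).
  - exact (lam_critical beta N t0 B b binv Hbeta0 HN Ht0 HY HBexp Hbmono HBint Hbinv lam Hlam).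
Qed.
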